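(* Let $\mathfrak{D}$, $\mathfrak{F}^{\mathfrak{D}}_\pm$, $g$, $x_d,x_{d'},\lambda_d$ be as in the standing setting, let $b=|W_\pm|$, and let $G=(V,E)$ be a graph. Then: (C1) If $G$ has no colouring with $2^{bk}$ colours, then for every $k$-generated valuation $\theta$ on $\mathfrak{F}^{\mathfrak{D}}_\pm\times G$ and every $m$, the formula $\gamma^{\mathfrak{D}}_m$ is true at every point of $(\mathfrak{F}^{\mathfrak{D}}_\pm\times G,\theta)$; in particular $\mathfrak{F}^{\mathfrak{D}}_\pm\times G\models\gamma^{\mathfrak{D}}_k$. (C2) If $G$ has a colouring with $N$ colours, then $\mathfrak{F}^{\mathfrak{D}}_\pm\times G\not\models\gamma^{\mathfrak{D}}_{N(b-1)+1}$.
   Context: Standing setting. Kripke frames $(W,(R_\lambda)_{\lambda\in\Lambda})$; a diagram is a finite pointed rooted frame $\mathfrak{D}=(\{x_0,\dots,x_n\},(R^{\mathfrak{D}}_\lambda),x_0)$ (every point reachable from $x_0$ by a directed path), and $\mathsf{e}^{\mathfrak{D}}(x_0)=\exists x_1\dots\exists x_n\bigwedge\{x_iR_\lambda x_j\mid x_iR^{\mathfrak{D}}_\lambda x_j\}$. An inner cycle is an undirected cycle (closed undirected path of positive length without immediate backtracking) not containing $x_0$. $\mathfrak{D}$ is globally minimal if deleting any single edge yields $\mathfrak{D}'$ such that $\forall x_0\mathsf{e}^{\mathfrak{D}'}(x_0)\to\forall x_0\mathsf{e}^{\mathfrak{D}}(x_0)$ is not first-order valid. Let $\mathfrak{D}$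 be a globally minimal rooted diagram with an inner cycle, and let $\mathfrak{F}^{\mathfrak{D}}_+=(W_\pm,(R^+_\lambda),w_0)$, $\mathfrak{F}^{\mathfrak{D}}_-=(W_\pm,(R^-_\lambda),w_0)$ be finite pointed frames, $x_d,x_{d'}\in W^{\mathfrak{D}}$, $\lambda_d\in\Lambda$, and $g:\mathfrak{D}\to\mathfrak{F}^{\mathfrak{D}}_+$ an injective homomorphism (edge-preserving, $g(x_0)=w_0$) such that: (C-i) $R^-_{\lambda_d}=R^+_{\lambda_d}\setminus\{(g(x_d),g(x_{d'}))\}$ where this pair lies in $R^+_{\lambda_d}$, and $R^-_\lambda=R^+_\lambda$ for $\lambda\ne\lambda_d$; (C-ii) $\mathfrak{F}^{\mathfrak{D}}_-\not\models\mathsf{e}^{\mathfrak{D}}(w_0)$; (C-iii) $\mathfrak{F}^{\mathfrak{D}}_+\models\mathsf{e}^{\mathfrak{D}}(w_0)$; (C-iv) $g(x_d),g(x_{d'})$ are joined in $\mathfrak{F}^{\mathfrak{D}}_-$ by an undirected path avoiding $w_0$ with all points in $g(W^{\mathfrak{D}})$; (C-v) every homomorphism $h:\mathfrak{D}\to\mathfrak{F}^{\mathfrak{D}}_+$ has image $g(W^{\mathfrak{D}})$ and satisfies $h(x_i)R^+_\lambda h(x_j)\Rightarrow x_iR^{\mathfrak{D}}_\lambda x_j$; (C-vi) $\mathfrak{F}^{\mathfrak{D}}_-\models\mathsf{e}^{\mathfrak{D}}(w)$ for all $w\in W_\pm\setminus\{w_0\}$. A graph is $G=(V,E)$ with $E$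 symmetric (loops allowed); an $N$-colouring is $\tau:V\to N$ with $\tau(v_1)\ne\tau(v_2)$ whenever $\{v_1,v_2\}\in E$. The pseudoproduct $\mathfrak{F}^{\mathfrak{D}}_\pm\times G$ has carrier $\{w_0\}\cup(W_\pm\setminus\{w_0\})\times V$; with $pr(w_0)=w_0$, $pr((y,v))=y$, $\pi(w_0)=\bot$, $\pi((y,v))=v$ ($\bot\notin V$), we have $\eta R_\lambda\chi$ iff either $pr(\eta)R^-_\lambda pr(\chi)$ and ($\pi(\eta)=\pi(\chi)$ or $\bot\in\{\pi(\eta),\pi(\chi)\}$), or $(pr(\eta),pr(\chi))\in R^+_\lambda\setminus R^-_\lambda$ and $\{\pi(\eta),\pi(\chi)\}\in E$. A valuation is $k$-generated if at most $k$ propositional variables get nonempty value. The formulas $\gamma^{\mathfrak{D}}_m$ are defined from a fixed spanning tree $\mathfrak{T}$ of $\mathfrak{D}$ (subframe on the same points, $R^{\mathfrak{T}}_\lambda\subseteq R^{\mathfrak{D}}_\lambda$, no edges into $x_0$, unique directed path from $x_0$ to each point) of depth $d$: with nominals $j_i$, $\chi_i=j_i\wedge\bigwedge_{x_iR^{\mathfrak{D}}_\lambda x_k}\Diamond_\lambda j_k$, $\eta_i=\chi_i\wedge\bigwedge_{x_iR^{\mathfrak{T}}_\lambda x_k}\Diamond_\lambda\eta_k$ (recursively from leaves), $\eta^{\mathfrak{D}}=\eta_0$, $\gamma^{\mathfrak{D}}_{\Psi}=\bigvee_{\kappa:\{0..n\}\to\Psi}\eta^{\mathfrak{D}}[\kappa(l)/j_l]$,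 and $\gamma^{\mathfrak{D}}_m=\Box^{\le d}(p_1\vee\dots\vee p_m)\to\gamma^{\mathfrak{D}}_{\{p_1,\dots,p_m\}}$, where $\Box^{\le d}\phi$ is the conjunction of all $\Box_{\lambda_1}\cdots\Box_{\lambda_k}\phi$, $k\le d$, $\lambda_i$ among indices occurring in $\mathfrak{D}$. *)

From mathcomp Require Import all_boot.
Set Implicit Arguments. Unset Strict Implicit. Unset Printing Implicit Defensive.

(* A diagram on points x_0..x_n ('I_n.+1, x_0 = ord0) is given by its finite
   list of labelled edges (x_i, lambda, x_j), meaning x_i R_lambda x_j. *)
Definition edge (n : nat) (L : eqType) := ('I_n.+1 * L * 'I_n.+1)%type.

Section Diagrams.
Variables (n : nat) (L : eqType).
Implicit Types (E ET : seq (edge n L)).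

Definition is_hom E (W : Type) (R : L -> W -> W -> Prop) (w : W) (h : 'I_n.+1 -> W) :=
  h ord0 = w /\ forall e, e \in E -> R e.1.2 (h e.1.1) (h e.2).

Definition dsat E (W : Type) (R : L -> W -> W -> Prop) (w : W) : Prop :=
  exists f : 'I_n.+1 -> W, f ord0 = w /\ forall e, e \in E -> R e.1.2 (f e.1.1) (f e.2).

Definition dedge E : rel 'I_n.+1 :=
  fun i j => has (fun e : edge n L => (e.1.1 == i) && (e.2 == j)) E.

Definition rooted E := forall i : 'I_n.+1, connect (dedge E) ord0 i.

Definition globally_minimal E :=
  forall e, e \in E ->
    ~ (forall (W : Type) (R : L -> W -> W -> Prop),
          (forall w, dsat (rem e E) R w) -> forall w, dsat E R w).

Definition usrc (s : edge n L * bool) : 'I_n.+1 := if s.2 then s.1.1.1 else s.1.2.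
Definition udst (s : edge n L * bool) : 'I_n.+1 := if s.2 then s.1.2 else s.1.1.1.
Definition ustep : rel (edge n L * bool) :=
  fun s t => (udst s == usrc t) && (s.1 != t.1).

Definition has_inner_cycle E :=
  exists (s : edge n L * bool) (p : seq (edge n L * bool)),
    [/\ all (fun t => t.1 \in E) (s :: p), path ustep s p,
        udst (last s p) = usrc s & all (fun t => usrc t != ord0) (s :: p)].

Fixpoint dpath ET (u : 'I_n.+1) (p : seq (edge n L)) (v : 'I_n.+1) : Prop :=
  match p with
  | [::] => u = v
  | e :: p' => [/\ e \in ET, e.1.1 = u & dpath ET e.2 p' v]
  end.

Definition spanning_tree E ET :=
  [/\ forall e, e \in ET -> e \in E,
      forall e, e \in ET -> e.2 != ord0
    & forall i : 'I_n.+1, exists p, dpath ET ord0 p i /\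
                                    forall q, dpath ET ord0 q i -> q = p].

Definition tree_depth ET (d : nat) :=
  (forall i p, dpath ET ord0 p i -> size p <= d) /\
  (exists i p, dpath ET ord0 p i /\ size p = d).

End Diagrams.

Inductive form (L : Type) :=
| FVar of nat | FTop | FBot
| FAnd of form L & form L | FOr of form L & form L | FImp of form L & form L
| FDia of L & form L | FBox of L & form L.
Arguments FVar {L}. Arguments FTop {L}. Arguments FBot {L}.

Fixpoint holds (L : Type) (W : Type) (R : L -> W -> W -> Prop) (th : nat -> W -> Prop)
    (f : form L) (w : W) : Prop :=
  match f with
  | FVar p => th p w
  | FTop => True
  | FBot => False
  | FAnd a b => holds R th a w /\ holds R th b w
  | FOr a b => holds R th a w \/ holds R th b w
  | FImp a b => holds R th a w -> holds R th b w
  | FDia l a => exists u, R l w u /\ holds R th a u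
  | FBox l a => forall u, R l w u -> holds R th a u
  end.

Definition fvalid (L : Type) (W : Type) (R : L -> W -> W -> Prop) (f : form L) :=
  forall (th : nat -> W -> Prop) (w : W), holds R th f w.

Definition kgen (W : Type) (th : nat -> W -> Prop) (k : nat) :=
  exists s : seq nat, size s <= k /\ forall p, p \notin s -> forall w, ~ th p w.

Definition bigAnd (L : Type) (s : seq (form L)) := foldr (@FAnd L) FTop s.
Definition bigOr (L : Type) (s : seq (form L)) := foldr (@FOr L) FBot s.

Fixpoint words (L : Type) (s : seq L) (k : nat) : seq (seq L) :=
  match k with
  | 0 => [:: [::]]
  | k'.+1 => flatten [seq [seq x :: w | w <- words s k'] | x <- s]
  end.

Definition boxes (L : Type) (ls : seq L) (phi : form L) := foldr (@FBox L) phi ls.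

Definition boxle (L : Type) (s : seq L) (d : nat) (phi : form L) :=
  bigAnd (flatten [seq [seq boxes w phi | w <- words s k] | k <- iota 0 d.+1]).

Section Gamma.
Variables (n : nat) (L : eqType) (E ET : seq (edge n L)) (d : nat).

Definition dlabels := undup [seq e.1.2 | e <- E].

(* chi_i, with the nominal j_l replaced by the variable kap l *)
Definition chi (kap : 'I_n.+1 -> nat) (i : 'I_n.+1) : form L :=
  FAnd (FVar (kap i))
       (bigAnd [seq FDia e.1.2 (FVar (kap e.2)) | e <- E & e.1.1 == i]).

(* eta_i, built recursively along the tree ET (fuel >= height of the subtree) *)
Fixpoint eta (fuel : nat) (kap : 'I_n.+1 -> nat) (i : 'I_n.+1) : form L :=
  FAnd (chi kap i)
       (match fuel with
        | 0 => FTop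
        | f.+1 => bigAnd [seq FDia e.1.2 (eta f kap e.2) | e <- ET & e.1.1 == i]
        end).

(* propositional variables p_1, ..., p_m are FVar 1, ..., FVar m *)
Definition gammaPsi (m : nat) : form L :=
  bigOr [seq eta d (fun l => (kap l : nat).+1) ord0 | kap : {ffun 'I_n.+1 -> 'I_m} <- enum {ffun 'I_n.+1 -> 'I_m}].

Definition gamma (m : nat) : form L :=
  FImp (boxle dlabels d (bigOr [seq FVar i | i <- iota 1 m])) (gammaPsi m).

End Gamma.

Fixpoint chain (T : Type) (r : T -> T -> Prop) (x : T) (p : seq T) : Prop :=
  match p with
  | [::] => True
  | y :: p' => r x y /\ chain r y p'
  end.

Definition colourable (V : Type) (EG : V -> V -> Prop) (N : nat) :=
  exists tau : V -> 'I_N, forall v1 v2, EG v1 v2 -> tau v1 <> tau v2.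

Section Pseudo.
Variables (L : Type) (Wpm : finType) (w0 : Wpm) (Rp Rm : L -> Wpm -> Wpm -> Prop)
          (V : Type) (EG : V -> V -> Prop).

(* carrier {w0} u (W \ {w0}) x V ; None stands for w0 *)
Definition pp_car := option ({y : Wpm | y != w0} * V)%type.
Definition pr (x : pp_car) : Wpm := if x is Some yv then val yv.1 else w0.
Definition piV (x : pp_car) : option V := omap snd x.  (* None = bottom *)

Definition pp_rel (l : L) (x y : pp_car) : Prop :=
  (Rm l (pr x) (pr y) /\ (piV x = piV y \/ piV x = None \/ piV y = None)) \/
  ((Rp l (pr x) (pr y) /\ ~ Rm l (pr x) (pr y)) /\
     exists v1 v2, [/\ piV x = Some v1, piV y = Some v2 & EG v1 v2]).
End Pseudo.
Arguments pp_rel [L Wpm] w0 Rp Rm [V] EG l x y.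

(* (C1): colour each vertex [v] of [G] by the truth values of the
   [k] variables on the layer of [v]; there are [2^(bk)] such colours, so some
   edge [v1 v2] of [G] joins two indistinguishable layers.  Off the root, (C-vi)
   gives a copy of the diagram inside a single layer; at the root, the copy [g]
   runs in layer [v1] and crosses the deleted edge into layer [v2].  In both
   cases each diagram point is sent into a set of points that the valuation
   cannot tell apart, which is all [gamma] needs.
   (C2): give every pair (colour, point of [W \ {w0}]) its own variable.  A
   witness for [gamma] at the root then yields a homomorphism [h] of the diagram
   into the frame [F_+] together with a colouring of the diagram that is
   constant along [R_-]-edges and changes across the deleted edge.  By (C-v)
   [h] is a bijection onto the image of [g], so the [R_-]-path of (C-iv) forces
   both ends of the deleted edge to have the same colour. *)

From mathcomp Require Import all_boot.
From Stdlib Require Import ClassicalEpsilon Classical.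
From mathcomp Require Import zify.
Set Implicit Arguments. Unset Strict Implicit. Unset Printing Implicit Defensive.

Section HoldsConnectives.
Variables (L W : Type) (R : L -> W -> W -> Prop) (th : nat -> W -> Prop).

Lemma holds_bigAnd_map (T : eqType) (F : T -> form L) (s : seq T) w :
  holds R th (bigAnd (map F s)) w <-> (forall x, x \in s -> holds R th (F x) w).
Proof.
elim: s => [|a s IH] /=; first by split.
split=> [[Fa /IH Fs] x|Fs]; first by rewrite in_cons => /predU1P [->|/Fs].
by split; [apply: Fs; rewrite mem_head | apply/IH => x sx; apply: Fs; rewrite in_cons sx orbT].
Qed.

Lemma holds_bigOr_map (T : eqType) (F : T -> form L) (s : seq T) w :
  holds R th (bigOr (map F s)) w <-> (exists2 x, x \in s & holds R th (F x) w).
Proof.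
elim: s => [|a s IH] /=; first by split=> // [[]].
split=> [[Fa|/IH [x sx Fx]]|[x]]; first by exists a; rewrite ?mem_head.
  by exists x; rewrite // in_cons sx orbT.
by rewrite in_cons => /predU1P [->|sx Fx]; [left | right; apply/IH; exists x].
Qed.

Lemma holds_bigAnd_cat s1 s2 w :
  holds R th (bigAnd (s1 ++ s2)) w <-> holds R th (bigAnd s1) w /\ holds R th (bigAnd s2) w.
Proof. by elim: s1 => [|f s1 IH] /=; [tauto | rewrite IH; tauto]. Qed.

Lemma holds_bigAnd_flatten (T : eqType) (G : T -> seq (form L)) (t : seq T) w :
  holds R th (bigAnd (flatten (map G t))) w <->
  (forall x, x \in t -> holds R th (bigAnd (G x)) w).
Proof.
elim: t => [|a t IH] /=; first by split.
rewrite holds_bigAnd_cat IH.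
split=> [[Ga Gt] x|Gt]; first by rewrite in_cons => /predU1P [->|/Gt].
by split=> [|x tx]; apply: Gt; rewrite ?mem_head // in_cons tx orbT.
Qed.
End HoldsConnectives.

Lemma mem_words (L : eqType) (s ls : seq L) :
  {subset ls <= s} -> ls \in words s (size ls).
Proof.
elim: ls => [|l ls IH] //= lsS; apply/flatten_mapP; exists l; first by apply: lsS; rewrite mem_head.
by apply: map_f; apply: IH => x lx; apply: lsS; rewrite in_cons lx orbT.
Qed.

Lemma holds_boxle_boxes (L : eqType) W (R : L -> W -> W -> Prop) th s d phi ls w :
  holds R th (boxle s d phi) w -> {subset ls <= s} -> size ls <= d ->
  holds R th (boxes ls phi) w.
Proof.
move=> /holds_bigAnd_flatten boxleW lsS ls_d.
have /boxleW/holds_bigAnd_map : size ls \in iota 0 d.+1 by rewrite mem_iota ltnS.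
by apply; apply: mem_words.
Qed.

Lemma holds_boxle_everywhere (L : eqType) W (R : L -> W -> W -> Prop) th s d phi :
  (forall w, holds R th phi w) -> forall w, holds R th (boxle s d phi) w.
Proof.
move=> phiT w; apply/holds_bigAnd_flatten => k _ /=; apply/holds_bigAnd_map => ls _.
by elim: ls w => [|l ls IH] //= w u _; apply: IH.
Qed.

Section GammaSemantics.
Variables (L : eqType) (n : nat) (E ET : seq (edge n L)) (d : nat).
Variables (W : Type) (R : L -> W -> W -> Prop) (th : nat -> W -> Prop).
Hypotheses (treeE : spanning_tree E ET) (depthET : tree_depth ET d).

Lemma holds_chi kap i w :
  holds R th (chi E kap i) w <-> th (kap i) w /\
   (forall e, e \in E -> e.1.1 = i -> exists u, R e.1.2 w u /\ th (kap e.2) u).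
Proof.
rewrite /chi /= holds_bigAnd_map; split=> [[thw chiw]|[thw chiw]]; split=> // e.
  by move=> eE ei; apply: chiw; rewrite mem_filter ei eqxx.
by rewrite mem_filter => /andP [/eqP ei eE]; apply: chiw.
Qed.

Definition diagram_closed (C : 'I_n.+1 -> W -> Prop) :=
  forall e, e \in E -> forall w, C e.1.1 w -> exists2 u, R e.1.2 w u & C e.2 u.

Lemma dpath_subset p i j e : dpath ET i p j -> e \in p -> e \in ET.
Proof.
elim: p i => [|a p IH] i //= [aET _ pj]; rewrite in_cons => /predU1P [->//|]; exact: IH pj.
Qed.

Lemma diagram_closed_dpath C phi p i j w :
  diagram_closed C -> dpath ET i p j -> C i w ->
  holds R th (boxes [seq e.1.2 | e <- p] phi) w -> exists2 w', C j w' & holds R th phi w'.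
Proof.
case: treeE => subE _ _ closedC; elim: p i w => [|e p IH] i w /=; first by move=> -> Cw; exists w.
move=> [eET <- pj] Cw boxw; have [u Ru Cu] := closedC e (subE e eET) w Cw.
exact: IH pj Cu (boxw u Ru).
Qed.

Lemma boxle_premise_meets_classes C m x :
  C ord0 x -> diagram_closed C ->
  holds R th (boxle (dlabels E) d (bigOr [seq FVar p | p <- iota 1 m])) x ->
  forall j, exists (o : 'I_m) w, C j w /\ th o.+1 w.
Proof.
case: (treeE) depthET => subE _ pathET [depth_le _] Cx closedC premise j.
have [p [pj _]] := pathET j.
have labelsE : {subset [seq e.1.2 | e <- p] <= dlabels E}.
  move=> l /mapP [e ep ->]; rewrite mem_undup; exact/map_f/subE/(dpath_subset pj).
have := holds_boxle_boxes premise labelsE; rewrite size_map => /(_ (depth_le _ _ pj)).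
case/(diagram_closed_dpath closedC pj Cx) => w Cw /holds_bigOr_map [q].
rewrite mem_iota => /andP [q_gt0 q_le] thqw; have q_lt : q.-1 < m by lia.
by exists (Ordinal q_lt), w; rewrite /= prednK.
Qed.

Lemma holds_eta_of_closed C kap :
  diagram_closed C -> (forall j w, C j w -> th (kap j) w) ->
  forall f i w, C i w -> holds R th (eta E ET f kap i) w.
Proof.
case: treeE => subE _ _ closedC Ckap.
have chiC i w : C i w -> holds R th (chi E kap i) w.
  move=> Cw; apply/holds_chi; split=> [|e eE ei]; first exact: Ckap.
  by move: Cw; rewrite -ei => /(closedC e eE) [u Ru Cu]; exists u; split; last exact: Ckap.
elim=> [|f IH] i w Cw; (split; first exact: chiC) => //.
apply/holds_bigAnd_map => e; rewrite mem_filter => /andP [/eqP ei eET].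
by move: Cw; rewrite -ei => /(closedC e (subE e eET)) [u Ru Cu]; exists u; split; last exact: IH.
Qed.

(* Since the valuation cannot tell the points of a class [C j] apart, one
   choice of variable [kap j] serves the whole class. *)
Lemma holds_gamma_of_closed C m x :
  C ord0 x -> diagram_closed C ->
  (forall j w w' p, p \in iota 1 m -> C j w -> C j w' -> th p w -> th p w') ->
  holds R th (gamma E ET d m) x.
Proof.
move=> Cx closedC uniformC; rewrite /gamma /= => premise.
have classes j :=
  constructive_indefinite_description _ (boxle_premise_meets_classes Cx closedC premise j).
pose kf := [ffun j => sval (classes j)].
have Ckf j w : C j w -> th (kf j).+1 w.
  rewrite ffunE; case: (classes j) => o [w' [Cw' thw']] /= Cw.
  by apply: uniformC Cw' Cw thw'; have := ltn_ord o; rewrite mem_iota; lia.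
apply/holds_bigOr_map; exists kf; first by rewrite mem_enum.
exact: holds_eta_of_closed closedC Ckf d ord0 x Cx.
Qed.

Lemma eta_chi_reachable kap p f i j w :
  holds R th (eta E ET f kap i) w -> dpath ET i p j -> size p <= f ->
  exists w', holds R th (chi E kap j) w'.
Proof.
elim: p f i w => [|e p IH] [|f] i w [chiw etaw] //=; try by move=> <- _; exists w.
case=> eET ei pj; rewrite ltnS => pf; move/holds_bigAnd_map: etaw => etaw.
have /etaw [u [_ etau]] : e \in [seq e <- ET | e.1.1 == i] by rewrite mem_filter ei eqxx.
exact: IH etau pj pf.
Qed.

Lemma gamma_chi_witnesses m x :
  holds R th (gamma E ET d m) x ->
  holds R th (boxle (dlabels E) d (bigOr [seq FVar p | p <- iota 1 m])) x ->
  exists kap, holds R th (chi E kap ord0) x /\ forall j, exists w, holds R th (chi E kap j) w.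
Proof.
case: treeE depthET => _ _ pathET [depth_le _] gammax /gammax /holds_bigOr_map [kf _ etax].
exists (fun l => (kf l).+1); split=> [|j]; first by case: d etax => [|?] [].
have [p [pj _]] := pathET j; exact: eta_chi_reachable etax pj (depth_le _ _ pj).
Qed.
End GammaSemantics.

Section Pseudoproduct.
Variables (L : Type) (Wpm : finType) (w0 : Wpm) (Rp Rm : L -> Wpm -> Wpm -> Prop).
Variables (V : Type) (EG : V -> V -> Prop).
Local Notation W := (pp_car w0 V).
Local Notation R := (pp_rel w0 Rp Rm EG).

(* the copy of [z] in layer [v]; the copies of [w0] are all identified *)
Definition pp_lift (z : Wpm) (v : V) : W := if insub z is Some y then Some (y, v) else None.

Lemma pr_pp_lift z v : pr (pp_lift z v) = z.
Proof. by rewrite /pp_lift; case: insubP => [y _ <-|/negbNE/eqP ->]. Qed.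

Lemma pp_lift_w0 v : pp_lift w0 v = None.
Proof. by rewrite /pp_lift insubF // eqxx. Qed.

Lemma pp_lift_val (y : {y : Wpm | y != w0}) v : pp_lift (val y) v = Some (y, v).
Proof. by rewrite /pp_lift valK. Qed.

Lemma piV_pp_lift z v : z != w0 -> piV (pp_lift z v) = Some v.
Proof. by rewrite /pp_lift; case: insubP => [y|/negP]. Qed.

Lemma piV_of_pr_neq_w0 (x : W) : pr x != w0 -> exists v, piV x = Some v.
Proof. by case: x => [[y v] _|]; [exists v | rewrite eqxx]. Qed.

Lemma pp_lift_rel_layer l z1 z2 v : Rm l z1 z2 -> R l (pp_lift z1 v) (pp_lift z2 v).
Proof.
move=> Rz; left; rewrite !pr_pp_lift; split=> //; rewrite /pp_lift.
by case: insubP => [y1|] _; case: insubP => [y2|] _ /=; auto.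
Qed.

Lemma pp_lift_rel_cross l z1 z2 v1 v2 :
  Rp l z1 z2 -> ~ Rm l z1 z2 -> z1 != w0 -> z2 != w0 -> EG v1 v2 ->
  R l (pp_lift z1 v1) (pp_lift z2 v2).
Proof.
move=> Rpz Rmz z1w0 z2w0 Ev; right; rewrite !pr_pp_lift !piV_pp_lift //.
by split=> //; exists v1, v2.
Qed.

Lemma pp_rel_pr : (forall l u v, Rm l u v -> Rp l u v) ->
  forall l (a b : W), R l a b -> Rp l (pr a) (pr b).
Proof. by move=> RmRp l a b [[/RmRp]|[[]]]. Qed.

Lemma pp_rel_layer l (a b : W) : R l a b -> Rm l (pr a) (pr b) ->
  pr a != w0 -> pr b != w0 -> piV a = piV b.
Proof.
move=> [[_ [//|[]]]|[[_ //]]] piV_None _ /piV_of_pr_neq_w0 [va piVa] /piV_of_pr_neq_w0 [vb piVb];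
  by rewrite piV_None in piVa piVb.
Qed.

Lemma pp_rel_cross l (a b : W) : R l a b -> ~ Rm l (pr a) (pr b) ->
  exists v1 v2, [/\ piV a = Some v1, piV b = Some v2 & EG v1 v2].
Proof. by move=> [[]|[_]]. Qed.
End Pseudoproduct.
Arguments pp_lift {Wpm w0 V}.

Definition asbool (P : Prop) : bool := if excluded_middle_informative P then true else false.

Lemma asbool_eqP (P Q : Prop) : asbool P = asbool Q -> (P <-> Q).
Proof. by rewrite /asbool; do 2 case: excluded_middle_informative => //; tauto. Qed.

Lemma not_colourable_monochromatic_edge (V : Type) (EG : V -> V -> Prop) (K : finType)
    (T : V -> K) :
  ~ colourable EG #|K| -> exists v1 v2, EG v1 v2 /\ T v1 = T v2.
Proof.
move=> noColour; apply: NNPP => noEdge; apply: noColour.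
exists (fun v => enum_rank (T v)) => v1 v2 Ev /enum_rank_inj Tv.
by apply: noEdge; exists v1, v2.
Qed.

Section ValidityOfGamma.
Variables (L : eqType) (n : nat) (E ET : seq (edge n L)) (d : nat).
Variables (Wpm : finType) (w0 : Wpm) (Rp Rm : L -> Wpm -> Wpm -> Prop).
Variables (V : Type) (EG : V -> V -> Prop).
Variables (xd xd' : 'I_n.+1) (ld : L) (g : 'I_n.+1 -> Wpm).
Local Notation W := (pp_car w0 V).
Local Notation R := (pp_rel w0 Rp Rm EG).
Hypotheses (treeE : spanning_tree E ET) (depthET : tree_depth ET d).
Hypotheses (homg : is_hom E Rp w0 g)
  (Rm_spec : forall l u v, Rm l u v <-> (Rp l u v /\ ~ (l = ld /\ u = g xd /\ v = g xd')))
  (gxd_w0 : g xd != w0) (gxd'_w0 : g xd' != w0)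
  (Rm_sat : forall w, w <> w0 -> dsat E Rm w)
  (EG_sym : forall v1 v2, EG v1 v2 -> EG v2 v1).

Lemma gamma_off_root th m (y : {y : Wpm | y != w0}) v :
  holds R th (gamma E ET d m) (Some (y, v)).
Proof.
have [f [f0 homf]] : dsat E Rm (val y) by apply: Rm_sat; apply/eqP; exact: (valP y).
apply: (holds_gamma_of_closed treeE depthET (C := fun j w => w = pp_lift (f j) v)) => //.
- by rewrite f0 pp_lift_val.
- by move=> e eE _ ->; exists (pp_lift (f e.2) v); first exact/pp_lift_rel_layer/homf.
- by move=> j _ _ p _ -> ->.
Qed.

(* At the root, the copy of [g] in layer [v1] jumps to layer [v2] along the
   deleted edge, which the pseudoproduct realises across the graph edge. *)
Lemma gamma_at_root th m v1 v2 : EG v1 v2 ->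
  (forall y p, p \in iota 1 m -> (th p (Some (y, v1)) <-> th p (Some (y, v2)))) ->
  holds R th (gamma E ET d m) None.
Proof.
move=> Ev12 thv12; case: homg => g0 homE.
pose C j (w : W) := exists2 c, c = v1 \/ c = v2 & w = pp_lift (g j) c.
apply: (holds_gamma_of_closed treeE depthET (C := C)) => //.
- by exists v1; rewrite ?g0 ?pp_lift_w0; first left.
- move=> e eE _ [c c12 ->]; have Rpe := homE e eE.
  have [Rme|Rme] := classic (Rm e.1.2 (g e.1.1) (g e.2)).
    by exists (pp_lift (g e.2) c); [exact: pp_lift_rel_layer | exists c].
  have [_ [e1 e2]] : e.1.2 = ld /\ g e.1.1 = g xd /\ g e.2 = g xd'.
    by apply: NNPP => special; apply/Rme/Rm_spec.
  rewrite e1 e2 in Rpe Rme *.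
  have [c' c'12 Ecc'] : exists2 c', c' = v1 \/ c' = v2 & EG c c'.
    by case: c12 => ->; [exists v2; [right|] | exists v1; [left|apply: EG_sym]].
  exists (pp_lift (g xd') c'); last by exists c'; rewrite // e2.
  exact: pp_lift_rel_cross.
- move=> j _ _ p pm [c c12 ->] [c' c'12 ->]; rewrite /pp_lift; case: insubP => // y _ _.
  by have := thv12 y p pm; case: c12 => ->; case: c'12 => ->; tauto.
Qed.

Definition layer_type k (s : seq nat) (th : nat -> W -> Prop) (v : V) :
    {ffun Wpm * 'I_k -> bool} :=
  [ffun yi : Wpm * 'I_k =>
     if insub yi.1 is Some y then asbool (th (nth 0 s yi.2) (Some (y, v))) else false].

Lemma layer_type_agree k s th v1 v2 : size s <= k ->
  layer_type k s th v1 = layer_type k s th v2 ->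
  forall y p, p \in s -> (th p (Some (y, v1)) <-> th p (Some (y, v2))).
Proof.
move=> sk types y p ps; have pk : index p s < k by rewrite (leq_trans _ sk) ?index_mem.
move/(congr1 (fun T : {ffun Wpm * 'I_k -> bool} => T (val y, Ordinal pk))): types.
by rewrite !ffunE /= valK nth_index //; apply: asbool_eqP.
Qed.

Lemma gamma_valid_of_not_colourable k s th m :
  size s <= k -> (forall p, p \in iota 1 m -> p \notin s -> forall w, ~ th p w) ->
  ~ colourable EG (2 ^ (#|Wpm| * k)) -> forall x, holds R th (gamma E ET d m) x.
Proof.
move=> sk th_s noColour.
have [v1 [v2 [Ev12 types]]] :
    exists v1 v2, EG v1 v2 /\ layer_type k s th v1 = layer_type k s th v2.
  apply: not_colourable_monochromatic_edge.
  by rewrite card_ffun card_bool card_prod card_ord.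
case=> [[y v]|]; first exact: gamma_off_root.
apply: (gamma_at_root Ev12) => y p pm; have [ps|ps] := boolP (p \in s).
  exact: layer_type_agree sk types y p ps.
by split=> /(th_s p pm ps).
Qed.
End ValidityOfGamma.

Section CodeValuation.
Variables (Wpm : finType) (w0 : Wpm) (V : Type) (N : nat) (tau : V -> 'I_N).
Local Notation W := (pp_car w0 V).

Definition colour_code (c : 'I_N) (y : {y : Wpm | y != w0}) : nat := (enum_rank (c, y)).+2.

Definition code_val (q : nat) (x : W) : Prop :=
  if x is Some (y, v) then q = colour_code (tau v) y else q = 1.

Definition pp_colour (x : W) : option 'I_N := omap tau (piV x).

Lemma code_val_functional q a b : code_val q a -> code_val q b ->
  pr a = pr b /\ pp_colour a = pp_colour b.
Proof.
case: a b => [[y v]|] [[y' v']|] //= -> //.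
by move=> /succn_inj/succn_inj/ord_inj/enum_rank_inj [tv ->]; rewrite /pp_colour /= tv.
Qed.

Lemma colour_code_lt c y : colour_code c y < (N * (#|Wpm| - 1)).+2.
Proof.
have card : #|{: 'I_N * {y : Wpm | y != w0}}| = N * (#|Wpm| - 1).
  by rewrite card_prod card_ord card_sig subn1 -(cardC1 w0).
by rewrite /colour_code !ltnS -card ltn_ord.
Qed.

Lemma code_val_covers (L : Type) (R : L -> W -> W -> Prop) (x : W) :
  holds R code_val (bigOr [seq FVar p | p <- iota 1 (N * (#|Wpm| - 1) + 1)]) x.
Proof.
apply/holds_bigOr_map; case: x => [[y v]|]; last by exists 1; rewrite // mem_iota add1n addn1.
exists (colour_code (tau v) y) => //; have := colour_code_lt (tau v) y.
rewrite mem_iota /colour_code; lia.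
Qed.
End CodeValuation.

Section Refutation.
Variables (L : eqType) (n : nat) (E : seq (edge n L)).
Variables (Wpm : finType) (w0 : Wpm) (Rp Rm : L -> Wpm -> Wpm -> Prop).
Variables (xd xd' : 'I_n.+1) (ld : L) (g : 'I_n.+1 -> Wpm).
Local Notation Rm_adj := (fun a c => exists l, Rm l a c \/ Rm l c a).
Hypotheses (g_inj : injective g)
  (Rm_spec : forall l u v, Rm l u v <-> (Rp l u v /\ ~ (l = ld /\ u = g xd /\ v = g xd')))
  (Rm_unsat : ~ dsat E Rm w0)
  (Rm_path : exists p : seq Wpm,
      [/\ chain Rm_adj (g xd) p, last (g xd) p = g xd'
        & forall a, a \in g xd :: p -> a <> w0 /\ exists i, g i = a])
  (Rp_rigid : forall h : 'I_n.+1 -> Wpm, is_hom E Rp w0 h ->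
      (forall w, (exists i, h i = w) <-> (exists i, g i = w)) /\
      (forall i j l, Rp l (h i) (h j) -> (i, l, j) \in E)).

Lemma Rm_sub_Rp l u v : Rm l u v -> Rp l u v.
Proof. by case/Rm_spec. Qed.

Lemma hom_injective h : is_hom E Rp w0 h -> injective h.
Proof.
case/Rp_rigid => img _; apply: in2T; apply/image_injP.
have -> : #|codom h| = #|codom g|.
  apply: eq_card => w; apply/codomP/codomP => [[i ->]|[i ->]].
    have [j gj] : exists j, g j = h i by apply/img; exists i.
    by exists j.
  have [j hj] : exists j, h j = g i by apply/img; exists i.
  by exists j.
by rewrite card_codom.
Qed.

Section Colouring.
Variables (C : Type) (h : 'I_n.+1 -> Wpm) (col : 'I_n.+1 -> C).
Hypotheses (homh : is_hom E Rp w0 h)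
  (col_Rm : forall e, e \in E -> Rm e.1.2 (h e.1.1) (h e.2) ->
     h e.1.1 <> w0 -> h e.2 <> w0 -> col e.1.1 = col e.2).

Lemma colour_Rm_step i j l : Rm l (h i) (h j) -> h i <> w0 -> h j <> w0 -> col i = col j.
Proof.
move=> Rmij; have RpE := (Rp_rigid homh).2 i j l ((Rm_spec _ _ _).1 Rmij).1.
exact: col_Rm RpE Rmij.
Qed.

Lemma colour_constant_on_chain q a i j :
  h i = a -> chain Rm_adj a q -> (forall b, b \in a :: q -> b <> w0 /\ exists k, g k = b) ->
  h j = last a q -> col j = col i.
Proof.
have himg b : (exists k, g k = b) -> exists k, h k = b := ((Rp_rigid homh).1 b).2.
elim: q a i => [|b q IH] a i hi /=.
  by move=> _ _; rewrite -hi => /(hom_injective homh) ->.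
move=> [[l Rmab] qchain] qgood hj.
have /qgood [b_w0 /himg [k hk]] : b \in [:: a, b & q] by rewrite in_cons mem_head orbT.
have [a_w0 _] := qgood a (mem_head _ _).
rewrite (IH b k hk qchain _ hj); last by move=> c cq; apply: qgood; rewrite in_cons cq orbT.
case: Rmab => Rmab; [apply/esym|]; apply: (colour_Rm_step (l := l)); rewrite ?hi ?hk //.
Qed.
End Colouring.

Lemma no_coloured_homomorphism (C : Type) (h : 'I_n.+1 -> Wpm) (col : 'I_n.+1 -> C) :
  is_hom E Rp w0 h ->
  (forall e, e \in E -> Rm e.1.2 (h e.1.1) (h e.2) ->
     h e.1.1 <> w0 -> h e.2 <> w0 -> col e.1.1 = col e.2) ->
  (forall e, e \in E -> ~ Rm e.1.2 (h e.1.1) (h e.2) -> col e.1.1 <> col e.2) -> False.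
Proof.
move=> homh col_Rm col_cut; have [p [pchain plast pgood]] := Rm_path.
have [e eE Rme] : exists2 e, e \in E & ~ Rm e.1.2 (h e.1.1) (h e.2).
  apply: NNPP => allRm; apply: Rm_unsat; exists h; split=> [|e eE]; first by case: homh.
  by apply: NNPP => Rme; apply: allRm; exists e.
have [_ [he1 he2]] : e.1.2 = ld /\ h e.1.1 = g xd /\ h e.2 = g xd'.
  by apply: NNPP => special; apply/Rme/Rm_spec; split=> //; case: homh => _; apply.
apply: (col_cut e eE Rme); apply/esym.
by apply: (colour_constant_on_chain homh col_Rm he1 pchain pgood); rewrite plast.
Qed.

Variables (ET : seq (edge n L)) (d : nat) (V : Type) (EG : V -> V -> Prop).
Variables (N : nat) (tau : V -> 'I_N).
Hypotheses (treeE : spanning_tree E ET) (depthET : tree_depth ET d)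
  (tau_proper : forall v1 v2, EG v1 v2 -> tau v1 <> tau v2).
Local Notation R := (pp_rel w0 Rp Rm EG).

Lemma gamma_refuted_at_root :
  ~ holds R (code_val tau) (gamma E ET d (N * (#|Wpm| - 1) + 1)) None.
Proof.
move=> gamma0; have [kap [chi0 chis]] := gamma_chi_witnesses treeE depthET gamma0
  (holds_boxle_everywhere _ _ (code_val_covers tau R) None).
pose wit j := sval (constructive_indefinite_description _ (chis j)).
have witP j : holds R (code_val tau) (chi E kap j) (wit j).
  exact: svalP (constructive_indefinite_description _ (chis j)).
pose h j := pr (wit j); pose col j := pp_colour tau (wit j).
have edge_witness e : e \in E ->
    exists2 u, R e.1.2 (wit e.1.1) u & pr u = h e.2 /\ pp_colour tau u = col e.2.
  move=> eE; have [_ /(_ e eE erefl) [u [Ru thu]]] := (holds_chi _ _ _ _ _ _).1 (witP e.1.1).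
  exists u => //; apply: code_val_functional thu _; exact: ((holds_chi _ _ _ _ _ _).1 (witP e.2)).1.
have homh : is_hom E Rp w0 h.
  split=> [|e /edge_witness [u Ru [<- _]]]; last exact: (pp_rel_pr Rm_sub_Rp) Ru.
  have [thw0 _] := (holds_chi _ _ _ _ _ _).1 chi0.
  exact/esym/(code_val_functional thw0 ((holds_chi _ _ _ _ _ _).1 (witP ord0)).1).1.
apply: (no_coloured_homomorphism (col := col) homh) => e /edge_witness [u Ru [hu <-]].
  move=> Rme /eqP h1 /eqP h2; rewrite /col /pp_colour (pp_rel_layer Ru) ?hu //.
rewrite -hu => /(pp_rel_cross Ru) [v1 [v2 [piV1 piV2 Ev12]]].
rewrite /col /pp_colour piV1 piV2.
by move=> [] /tau_proper; apply.
Qed.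

End Refutation.

Theorem mainTheorem5 (L : eqType) (n : nat) (E ET : seq (edge n L)) (d : nat)
  (Wpm : finType) (w0 : Wpm) (Rp Rm : L -> Wpm -> Wpm -> Prop)
  (xd xd' : 'I_n.+1) (ld : L) (g : 'I_n.+1 -> Wpm)
  (V : Type) (EG : V -> V -> Prop) :
  (* D: globally minimal rooted diagram with an inner cycle *)
  uniq E -> rooted E -> globally_minimal E -> has_inner_cycle E ->
  (* fixed spanning tree of depth d used to define gamma *)
  spanning_tree E ET -> tree_depth ET d ->
  (* g : injective homomorphism D -> F_+ *)
  injective g -> is_hom E Rp w0 g ->
  (* (C-i) *)
  Rp ld (g xd) (g xd') ->
  (forall l u v, Rm l u v <-> (Rp l u v /\ ~ (l = ld /\ u = g xd /\ v = g xd'))) ->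
  (* (C-ii), (C-iii) *)
  ~ dsat E Rm w0 -> dsat E Rp w0 ->
  (* (C-iv) *)
  (exists p : seq Wpm,
      [/\ chain (fun a c => exists l, Rm l a c \/ Rm l c a) (g xd) p,
          last (g xd) p = g xd'
        & forall a, a \in g xd :: p -> a <> w0 /\ exists i, g i = a]) ->
  (* (C-v) *)
  (forall h : 'I_n.+1 -> Wpm, is_hom E Rp w0 h ->
      (forall w, (exists i, h i = w) <-> (exists i, g i = w)) /\
      (forall i j l, Rp l (h i) (h j) -> (i, l, j) \in E)) ->
  (* (C-vi) *)
  (forall w, w <> w0 -> dsat E Rm w) ->
  (* G is a graph: symmetric edge relation *)
  (forall v1 v2, EG v1 v2 -> EG v2 v1) ->
  (* (C1) *)
  (forall k, ~ colourable EG (2 ^ (#|Wpm| * k)) ->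
     (forall th, kgen th k -> forall m x,
        holds (pp_rel w0 Rp Rm EG) th (gamma E ET d m) x) /\
     fvalid (pp_rel w0 Rp Rm EG) (gamma E ET d k)) /\
  (* (C2) *)
  (forall N, colourable EG N ->
     ~ fvalid (pp_rel w0 Rp Rm EG) (gamma E ET d (N * (#|Wpm| - 1) + 1))).
Proof.
move=> _ _ _ _ treeE depthET g_inj homg _ Rm_spec Rm_unsat _ Rm_path Rp_rigid Rm_sat EG_sym.
have [gxd_w0 gxd'_w0] : g xd != w0 /\ g xd' != w0.
  case: Rm_path => p [_ plast pgood]; split; apply/eqP.
    exact: (pgood _ (mem_head _ _)).1.
  by apply: (pgood _ _).1; rewrite -plast mem_last.
have gamma_valid := gamma_valid_of_not_colourable treeE depthET homg Rm_spec gxd_w0 gxd'_w0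
  Rm_sat EG_sym.
split=> [k noColour|N [tau tau_proper] gamma_valid_N].
  split=> [th [s [sk th_s]] m|th].
    exact: (gamma_valid k s th m sk (fun p _ => th_s p) noColour).
  by apply: gamma_valid (eq_leq (size_iota 1 k)) _ noColour => p ->.
exact: (gamma_refuted_at_root g_inj Rm_spec Rm_unsat Rm_path Rp_rigid treeE depthET tau_proper
  (gamma_valid_N _ None)).
Qed.
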